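(* Let $\lambda\in\mathfrak h_{\mathbb R}^*$ and $J\subseteq I$, and let $\mathbf P(\lambda,J)$ be the polyhedron $$\mathbf P(\lambda,J)=\operatorname{conv}_{\mathbb R}(W_J(\lambda))-\operatorname{cone}_{\mathbb R}(\Phi^+\setminus\Phi^+_J).$$ Let $\lambda'\in W_J(\lambda)$ be the element satisfying $\lambda'(h_{\alpha_j})\ge0$ for all $j\in J$. Then $F$ is a face of $\mathbf P(\lambda,J)$ if and only if $$w(F)=\operatorname{conv}_{\mathbb R}(W_{J\cap I_0}(\lambda'))-\operatorname{cone}_{\mathbb R}(\Phi^+_{I_0}\setminus\Phi^+_{J\cap I_0})$$ for some $w\in W_J$ and $I_0\subseteq I$.
   Context: Let $\mathfrak g$ be a complex semisimple Lie algebra with Cartan subalgebra $\mathfrak h$, roots $\Phi$, simple roots $\{\alpha_i:i\in I\}$, positive roots $\Phi^+$; $\mathfrak h_{\mathbb R}^*$ is the real span of $\Phi$, with the $W$-invariant inner product induced by the Killing form; $h_\alpha$ is the coroot of $\alpha$. For $K\subseteq I$: $\Phi^+_K=\Phi^+\cap\sum_{k\in K}\mathbb Z\alpha_k$, and $W_K$ is the subgroup of the Weyl group generated by the simple reflections $s_k$, $k\in K$; $W_K(\mu)$ is the $W_K$-orbit of $\mu$. $\operatorname{conv}_{\mathbb R}$ = convex hull; $\operatorname{cone}_{\mathbb R}(S)$ = set of finite nonnegative real combinations; $A-B=\{a-b:a\in A,b\in B\}$. A face of $\mathcal P\subseteq\mathbb R^n$ is $\mathcal P$ itself or $\mathcal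 P\cap H(v,w)$ where $H(v,w)=\{u:v\cdot(u-w)=0\}$, $\mathcal P\subseteq\{u:v\cdot(u-w)\ge0\}$ and $\mathcal P\cap H(v,w)\ne\emptyset$. *)

From HB Require Import structures.
From mathcomp Require Import all_boot all_order all_algebra.
Set Implicit Arguments. Unset Strict Implicit. Unset Printing Implicit Defensive.
Import Order.TTheory GRing.Theory Num.Theory.
Local Open Scope ring_scope.

Section RootSystems.
Variables (R : realFieldType) (n : nat).
Implicit Types (u v x y : 'rV[R]_n).

(* the (W-invariant) inner product on h_R^* ~ R^n *)
Definition dot u v : R := (u *m v^T) 0 0.

Definition refl (a x : 'rV[R]_n) : 'rV[R]_n :=
  x - ((2 * dot x a) / dot a a) *: a.

Definition root_system (Phi : seq 'rV[R]_n) : Prop :=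
  [/\ (0 : 'rV[R]_n) \notin Phi,
      forall a b, a \in Phi -> b \in Phi -> refl a b \in Phi,
      forall a b, a \in Phi -> b \in Phi ->
        exists z : int, (2 * dot b a) / dot a a = z%:~R
    & forall a (c : R), a \in Phi -> c *: a \in Phi -> c = 1 \/ c = -1].

(* alpha : I -> Phi is a base (the simple roots), I = 'I_n *)
Definition simple_roots (Phi : seq 'rV[R]_n) (alpha : 'I_n -> 'rV[R]_n) : Prop :=
  [/\ forall i, alpha i \in Phi,
      forall c : 'I_n -> R, \sum_i c i *: alpha i = 0 -> forall i, c i = 0
    & forall b, b \in Phi -> exists c : 'I_n -> int,
        b = \sum_i (c i)%:~R *: alpha i /\
        ((forall i, 0 <= c i) \/ (forall i, c i <= 0))].

Definition posroot (Phi : seq 'rV[R]_n) (alpha : 'I_n -> 'rV[R]_n)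
  (K : {set 'I_n}) (b : 'rV[R]_n) : Prop :=
  b \in Phi /\ exists c : 'I_n -> nat,
    b = \sum_i (c i)%:R *: alpha i /\ forall i, i \notin K -> c i = 0.

(* action of the Weyl group element s_{k1} ... s_{km} given by a word *)
Definition wact (alpha : 'I_n -> 'rV[R]_n) (s : seq 'I_n) (x : 'rV[R]_n) :=
  foldr (fun k y => refl (alpha k) y) x s.

Definition wordin (K : {set 'I_n}) (s : seq 'I_n) : bool := all (fun k => k \in K) s.

Definition Worbit (alpha : 'I_n -> 'rV[R]_n) (K : {set 'I_n}) (mu : 'rV[R]_n)
  : 'rV[R]_n -> Prop :=
  fun x => exists s, wordin K s /\ x = wact alpha s mu.

Definition conv (S : 'rV[R]_n -> Prop) : 'rV[R]_n -> Prop :=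
  fun x => exists (m : nat) (p : 'I_m -> 'rV[R]_n) (t : 'I_m -> R),
    [/\ forall i, S (p i), forall i, 0 <= t i, \sum_i t i = 1
      & x = \sum_i t i *: p i].

Definition cone (S : 'rV[R]_n -> Prop) : 'rV[R]_n -> Prop :=
  fun x => exists (m : nat) (p : 'I_m -> 'rV[R]_n) (t : 'I_m -> R),
    [/\ forall i, S (p i), forall i, 0 <= t i & x = \sum_i t i *: p i].

Definition msub (A B : 'rV[R]_n -> Prop) : 'rV[R]_n -> Prop :=
  fun x => exists a b, [/\ A a, B b & x = a - b].

Definition Ppoly (Phi : seq 'rV[R]_n) (alpha : 'I_n -> 'rV[R]_n)
  (K L : {set 'I_n}) (mu : 'rV[R]_n) : 'rV[R]_n -> Prop :=
  msub (conv (Worbit alpha K mu))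
       (cone (fun b => posroot Phi alpha L b /\ ~ posroot Phi alpha K b)).

Definition is_face (P F : 'rV[R]_n -> Prop) : Prop :=
  (forall x, F x <-> P x) \/
  exists v w : 'rV[R]_n,
    [/\ forall u, P u -> 0 <= dot v (u - w),
        forall u, F u <-> (P u /\ dot v (u - w) = 0)
      & exists u, P u /\ dot v (u - w) = 0].

End RootSystems.

(* Faces of P = conv (W_J lam) - cone (Phi^+ \ Phi^+_J) are the sets where a linear
   functional v, bounded below on P, attains its minimum.  Boundedness forces v <= 0
   on Phi^+ \ Phi^+_J; moving v by some w in W_J into the J-antidominant chamber then
   makes it antidominant for every simple root, and w (which preserves P) carries
   the face to the minimum set of w v.
   For antidominant v with zero set I0 on the simple roots and J-dominant lam', the
   minimum of v over W_J lam' is attained exactly on W_(J /\ I0) lam': lam' - w lam'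
   is a nonnegative combination of simple roots, and in case of equality a norm
   comparison shows w lam' is already in that smaller orbit.  The maximum of v on
   Phi^+, namely 0, is attained exactly on Phi^+_I0.  Hence the minimum set is
   P(lam', J /\ I0, I0).  Conversely, each I0 is the zero set of the antidominant
   functional - sum_(i \notin I0) omega_i. *)

From HB Require Import structures.
From mathcomp Require Import all_boot all_order all_algebra.
Set Implicit Arguments. Unset Strict Implicit. Unset Printing Implicit Defensive.
Import Order.TTheory GRing.Theory Num.Theory.
Local Open Scope ring_scope.

Section InnerProduct.
Variables (R : realFieldType) (n : nat).
Implicit Types (u v w : 'rV[R]_n).

Lemma dotE u v : dot u v = \sum_k u 0 k * v 0 k.
Proof. by rewrite /dot !mxE; apply: eq_bigr => k _; rewrite mxE. Qed.

Lemma dotC u v : dot u v = dot v u.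
Proof. by rewrite !dotE; apply: eq_bigr => k _; rewrite mulrC. Qed.

Lemma dotDl u w v : dot (u + w) v = dot u v + dot w v.
Proof. by rewrite !dotE -big_split; apply: eq_bigr => k _; rewrite mxE mulrDl. Qed.

Lemma dotZl (c : R) u v : dot (c *: u) v = c * dot u v.
Proof. by rewrite !dotE mulr_sumr; apply: eq_bigr => k _; rewrite mxE mulrA. Qed.

Lemma dot0l v : dot 0 v = 0.
Proof. by rewrite -(scale0r 0) dotZl mul0r. Qed.

Lemma dotNl u v : dot (- u) v = - dot u v.
Proof. by rewrite -scaleN1r dotZl mulN1r. Qed.

Lemma dotBl u w v : dot (u - w) v = dot u v - dot w v.
Proof. by rewrite dotDl dotNl. Qed.

Lemma dotDr u w v : dot v (u + w) = dot v u + dot v w.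
Proof. by rewrite dotC dotDl !(dotC v). Qed.

Lemma dotZr (c : R) u v : dot v (c *: u) = c * dot v u.
Proof. by rewrite dotC dotZl dotC. Qed.

Lemma dot0r v : dot v 0 = 0.
Proof. by rewrite dotC dot0l. Qed.

Lemma dotNr u v : dot v (- u) = - dot v u.
Proof. by rewrite dotC dotNl dotC. Qed.

Lemma dotBr u w v : dot v (u - w) = dot v u - dot v w.
Proof. by rewrite dotDr dotNr. Qed.

Lemma dot_suml (I : Type) (r : seq I) (P : pred I) (F : I -> 'rV[R]_n) v :
  dot (\sum_(i <- r | P i) F i) v = \sum_(i <- r | P i) dot (F i) v.
Proof. exact: (big_morph (fun u => dot u v) (fun a b => dotDl a b v) (dot0l v)). Qed.

Lemma dot_sumr (I : Type) (r : seq I) (P : pred I) (F : I -> 'rV[R]_n) v :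
  dot v (\sum_(i <- r | P i) F i) = \sum_(i <- r | P i) dot v (F i).
Proof. by rewrite dotC dot_suml; apply: eq_bigr => i _; rewrite dotC. Qed.

Lemma dotrr_ge0 u : 0 <= dot u u.
Proof. by rewrite dotE sumr_ge0 // => k _; rewrite -expr2 sqr_ge0. Qed.

Lemma dotrr_eq0 u : dot u u = 0 -> u = 0.
Proof.
rewrite dotE => u0; apply/rowP => k; rewrite mxE.
have sq_ge0 i : true -> 0 <= u 0 i * u 0 i by rewrite -expr2 sqr_ge0.
by move/eqP: (psumr_eq0P sq_ge0 u0 (i := k) isT); rewrite mulf_eq0 orbb => /eqP.
Qed.

Lemma dotrrD u w : dot (u + w) (u + w) = dot u u + (dot u w + dot u w) + dot w w.
Proof. by rewrite !dotDl !dotDr (dotC w u) !addrA. Qed.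

End InnerProduct.

Section Reflections.
Variables (R : realFieldType) (n : nat).
Implicit Types (a x y : 'rV[R]_n).

Lemma reflE a x : refl a x = x - (dot x a * (2 / dot a a)) *: a.
Proof. by rewrite /refl mulrA (mulrC 2). Qed.

Lemma reflD a x y : refl a (x + y) = refl a x + refl a y.
Proof. by rewrite !reflE dotDl mulrDl scalerDl opprD addrACA. Qed.

Lemma reflZ a (c : R) x : refl a (c *: x) = c *: refl a x.
Proof. by rewrite !reflE dotZl scalerBr scalerA !mulrA. Qed.

Lemma reflN a x : refl a (- x) = - refl a x.
Proof. by rewrite -scaleN1r reflZ scaleN1r. Qed.

Lemma reflB a x y : refl a (x - y) = refl a x - refl a y.
Proof. by rewrite reflD reflN. Qed.

Lemma refl0 a : refl a 0 = 0.
Proof. by rewrite -(scale0r 0) reflZ !scale0r. Qed.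

Lemma refl_id a x : dot x a = 0 -> refl a x = x.
Proof. by move=> xa0; rewrite reflE xa0 mul0r scale0r subr0. Qed.

Lemma refl_self a : a != 0 -> refl a a = - a.
Proof.
move=> a_neq0; have aa_neq0 : dot a a != 0 by apply: contra a_neq0 => /eqP/dotrr_eq0->.
by rewrite reflE mulrCA mulfV // mulr1 scaler_nat mulr2n opprD addrA subrr add0r.
Qed.

Lemma dot_refll a x y : dot (refl a x) y = dot x (refl a y).
Proof.
rewrite !reflE dotBl dotBr dotZl dotZr (dotC a y); congr (_ - _).
by rewrite mulrC mulrA mulrAC.
Qed.

Lemma reflK a : a != 0 -> involutive (refl a).
Proof.
move=> a_neq0 x; rewrite [refl a x]reflE reflB reflZ refl_self // reflE scalerN opprK.
by rewrite subrK.
Qed.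

Lemma dot_refl a x y : a != 0 -> dot (refl a x) (refl a y) = dot x y.
Proof. by move=> a_neq0; rewrite dot_refll reflK. Qed.

End Reflections.

Section ConvexCones.
Variables (R : realFieldType) (n : nat).
Implicit Types (S T : 'rV[R]_n -> Prop) (v x : 'rV[R]_n).

Lemma conv_mono S T x : (forall y, S y -> T y) -> conv S x -> conv T x.
Proof. by move=> ST [m [p [t [Sp t_ge0 t1 ->]]]]; exists m, p, t; split=> // i; apply: ST. Qed.

Lemma cone_mono S T x : (forall y, S y -> T y) -> cone S x -> cone T x.
Proof. by move=> ST [m [p [t [Sp t_ge0 ->]]]]; exists m, p, t; split=> // i; apply: ST. Qed.

Lemma msub_conv_cone_mono S S' T T' x :
  (forall y, S y -> S' y) -> (forall y, T y -> T' y) ->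
  msub (conv S) (cone T) x -> msub (conv S') (cone T') x.
Proof.
move=> SS' TT' [a [b [Sa Tb ->]]]; exists a, b.
by split=> //; [apply: conv_mono Sa | apply: cone_mono Tb].
Qed.

Lemma conv1 S x : S x -> conv S x.
Proof.
by move=> Sx; exists 1%N, (fun=> x), (fun=> 1); rewrite !big_ord1 scale1r.
Qed.

Lemma cone0 S : cone S 0.
Proof. by exists 0%N, (fun=> 0), (fun=> 0); split; [case|case|rewrite big_ord0]. Qed.

Lemma cone1 S (t : R) x : 0 <= t -> S x -> cone S (t *: x).
Proof. by move=> t_ge0 Sx; exists 1%N, (fun=> x), (fun=> t); rewrite big_ord1. Qed.

(* Points with zero weight are replaced by a point [p i0] of positive weight. *)
Lemma conv_support S m (p : 'I_m -> 'rV[R]_n) (t : 'I_m -> R) :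
  (forall i, 0 <= t i) -> \sum_i t i = 1 -> (forall i, t i != 0 -> S (p i)) ->
  conv S (\sum_i t i *: p i).
Proof.
move=> t_ge0 t1 Sp; have [/existsP [i0 ti0]|] := boolP [exists i, t i != 0]; last first.
  rewrite negb_exists => /forallP t0; move: t1; rewrite big1 => [/eqP|i _].
    by rewrite eq_sym oner_eq0.
  by move/negPn: (t0 i) => /eqP.
exists m, (fun i => if t i == 0 then p i0 else p i), t; split=> //.
  by move=> i; case: eqP => [_|/eqP]; apply: Sp.
by apply: eq_bigr => i _; case: eqP => // ->; rewrite !scale0r.
Qed.

Lemma cone_support S m (p : 'I_m -> 'rV[R]_n) (t : 'I_m -> R) :
  (forall i, 0 <= t i) -> (forall i, t i != 0 -> S (p i)) -> cone S (\sum_i t i *: p i).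
Proof.
move=> t_ge0 Sp; have [/existsP [i0 ti0]|] := boolP [exists i, t i != 0]; last first.
  rewrite negb_exists => /forallP t0; rewrite big1; first exact: cone0.
  by move=> i _; move/negPn: (t0 i) => /eqP->; rewrite scale0r.
exists m, (fun i => if t i == 0 then p i0 else p i), t; split=> //.
  by move=> i; case: eqP => [_|/eqP]; apply: Sp.
by apply: eq_bigr => i _; case: eqP => // ->; rewrite !scale0r.
Qed.

Lemma dot_comb v m (p : 'I_m -> 'rV[R]_n) (t : 'I_m -> R) :
  dot v (\sum_i t i *: p i) = \sum_i t i * dot v (p i).
Proof. by rewrite dot_sumr; apply: eq_bigr => i _; rewrite dotZr. Qed.

Lemma dot_conv_comb v c m (p : 'I_m -> 'rV[R]_n) (t : 'I_m -> R) : \sum_i t i = 1 ->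
  dot v (\sum_i t i *: p i) - c = \sum_i t i * (dot v (p i) - c).
Proof.
move=> t1; rewrite dot_comb -{1}[c]mul1r -t1 mulr_suml -sumrB.
by apply: eq_bigr => i _; rewrite mulrBr.
Qed.

Lemma conv_dot_ge S v c x : (forall y, S y -> c <= dot v y) -> conv S x -> c <= dot v x.
Proof.
move=> Sc [m [p [t [Sp t_ge0 t1 ->]]]]; rewrite -subr_ge0 dot_conv_comb //.
by rewrite sumr_ge0 // => i _; rewrite mulr_ge0 // subr_ge0 Sc.
Qed.

Lemma conv_dot_eq S v c x : (forall y, S y -> c <= dot v y) ->
  conv S x -> dot v x = c -> conv (fun y => S y /\ dot v y = c) x.
Proof.
move=> Sc [m [p [t [Sp t_ge0 t1 ->]]]] xc.
have term_ge0 i : true -> 0 <= t i * (dot v (p i) - c) by rewrite mulr_ge0 ?subr_ge0 ?Sc.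
have /(psumr_eq0P term_ge0) term0 : \sum_i t i * (dot v (p i) - c) = 0.
  by rewrite -dot_conv_comb // xc subrr.
apply: conv_support => // i ti0; split=> //; apply/eqP; rewrite -subr_eq0.
by move/eqP: (term0 i isT); rewrite mulf_eq0 (negbTE ti0).
Qed.

Lemma conv_dot_const S v c x : conv (fun y => S y /\ dot v y = c) x -> dot v x = c.
Proof.
move=> [m [p [t [Sp _ t1 ->]]]]; apply/eqP; rewrite -subr_eq0 dot_conv_comb //.
by rewrite big1 // => i _; case: (Sp i) => _ ->; rewrite subrr mulr0.
Qed.

Lemma cone_dot_le S v x : (forall y, S y -> dot v y <= 0) -> cone S x -> dot v x <= 0.
Proof.
move=> S0 [m [p [t [Sp t_ge0 ->]]]]; rewrite dot_comb sumr_le0 // => i _.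
by rewrite mulr_ge0_le0 ?S0.
Qed.

Lemma cone_dot_eq S v x : (forall y, S y -> dot v y <= 0) ->
  cone S x -> dot v x = 0 -> cone (fun y => S y /\ dot v y = 0) x.
Proof.
move=> S0 [m [p [t [Sp t_ge0 ->]]]] x0.
have term_ge0 i : true -> 0 <= - (t i * dot v (p i)) by rewrite oppr_ge0 mulr_ge0_le0 ?S0.
have /(psumr_eq0P term_ge0) term0 : \sum_i - (t i * dot v (p i)) = 0.
  by rewrite sumrN -dot_comb x0 oppr0.
apply: cone_support => // i ti0; split=> //; apply/eqP.
by move/eqP: (term0 i isT); rewrite oppr_eq0 mulf_eq0 (negbTE ti0).
Qed.

Lemma cone_dot_const S v x : cone (fun y => S y /\ dot v y = 0) x -> dot v x = 0.
Proof.
move=> [m [p [t [Sp _ ->]]]]; rewrite dot_comb big1 // => i _.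
by case: (Sp i) => _ ->; rewrite mulr0.
Qed.

Lemma msub_conv_cone_dot_ge S T v c x :
  (forall y, S y -> c <= dot v y) -> (forall y, T y -> dot v y <= 0) ->
  msub (conv S) (cone T) x -> c <= dot v x.
Proof.
move=> Sc T0 [a [b [Sa Tb ->]]]; rewrite dotBr -[c]subr0.
by rewrite lerB ?(conv_dot_ge Sc) ?(cone_dot_le T0).
Qed.

Lemma msub_conv_cone_dot_eq S T v c x :
  (forall y, S y -> c <= dot v y) -> (forall y, T y -> dot v y <= 0) ->
  msub (conv S) (cone T) x /\ dot v x = c <->
  msub (conv (fun y => S y /\ dot v y = c)) (cone (fun y => T y /\ dot v y = 0)) x.
Proof.
move=> Sc T0; split=> [[[a [b [Sa Tb ->]]] xc]|[a [b [Sa Tb ->]]]]; last first.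
  split; last by rewrite dotBr (conv_dot_const Sa) (cone_dot_const Tb) subr0.
  by exists a, b; split=> //; [apply: conv_mono Sa => y [] | apply: cone_mono Tb => y []].
have /eqP : (dot v a - c) + - dot v b = 0 by rewrite addrAC -dotBr xc subrr.
rewrite paddr_eq0 ?subr_ge0 ?oppr_ge0 ?(conv_dot_ge Sc) ?(cone_dot_le T0) //.
rewrite subr_eq0 oppr_eq0 => /andP [/eqP ac /eqP b0].
by exists a, b; split; [apply: conv_dot_eq | apply: cone_dot_eq |].
Qed.

End ConvexCones.

Lemma is_face_min (R : realFieldType) (n : nat) (P F : 'rV[R]_n -> Prop) :
  (exists u, P u) ->
  is_face P F <->
  exists v c, [/\ forall u, P u -> c <= dot v u, exists u, P u /\ dot v u = c
               & forall u, F u <-> P u /\ dot v u = c].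
Proof.
move=> [u0 Pu0].
have dotB_eq0 v u w : dot v (u - w) = 0 <-> dot v u = dot v w.
  by rewrite dotBr; split=> [/eqP|->]; rewrite ?subr_eq0 ?subrr => // /eqP.
split.
  case=> [FP|[v [w [Pv Fv [u [Pu /dotB_eq0 uw]]]]]].
    exists 0, 0; split=> [u _||u]; first by rewrite dot0l.
      by exists u0; rewrite dot0l.
    by rewrite dot0l; split=> [/FP|[/FP]].
  exists v, (dot v w); split=> [u' /Pv||u']; first by rewrite dotBr subr_ge0.
    by exists u.
  by split=> [/Fv [? /dotB_eq0]|[? /dotB_eq0 ?]]; last apply/Fv.
move=> [v [c [Pc [u [Pu uc]] Fv]]]; right; exists v, u; split=> [u' Pu'|u'|].
- by rewrite dotBr subr_ge0 uc Pc.
- split=> [/Fv [Pu' u'c]|[Pu' /dotB_eq0 u'u]].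
    by split=> //; apply/dotB_eq0; rewrite uc.
  by apply/Fv; rewrite u'u uc.
- by exists u; rewrite subrr dot0r.
Qed.

Lemma is_face_ext (R : realFieldType) (n : nat) (P Q F : 'rV[R]_n -> Prop) :
  (forall x, P x <-> Q x) -> is_face P F -> is_face Q F.
Proof.
move=> PQ [FP|[v [w [Pvw FPv [u [Pu uw]]]]]]; [left=> x | right; exists v, w; split].
- exact: iff_trans (FP x) (PQ x).
- by move=> u' /PQ /Pvw.
- by move=> u'; apply: iff_trans (FPv u') _; split=> -[/PQ].
- by exists u; split=> //; apply/PQ.
Qed.

Section WeylWords.
Variables (R : realFieldType) (n : nat) (alpha : 'I_n -> 'rV[R]_n).
Hypothesis alpha_neq0 : forall i, alpha i != 0.
Implicit Types (K L : {set 'I_n}) (s z : seq 'I_n) (mu x y : 'rV[R]_n).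
Local Notation wact := (wact alpha).

Lemma wordin_cat K s z : wordin K (s ++ z) = wordin K s && wordin K z.
Proof. exact: all_cat. Qed.

Lemma wordin_rev K s : wordin K (rev s) = wordin K s.
Proof. exact: all_rev. Qed.

Lemma wordin_sub K L s : K \subset L -> wordin K s -> wordin L s.
Proof. by move=> /subsetP KL /allP Ks; apply/allP => k /Ks /KL. Qed.

Lemma wact_cat s z x : wact (s ++ z) x = wact s (wact z x).
Proof. exact: foldr_cat. Qed.

Lemma wact_rcons s k x : wact (rcons s k) x = wact s (refl (alpha k) x).
Proof. by rewrite -cats1 wact_cat. Qed.

Lemma wactD s x y : wact s (x + y) = wact s x + wact s y.
Proof. by elim: s => //= k s ->; rewrite reflD. Qed.

Lemma wactZ s (c : R) x : wact s (c *: x) = c *: wact s x.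
Proof. by elim: s => //= k s ->; rewrite reflZ. Qed.

Lemma wactN s x : wact s (- x) = - wact s x.
Proof. by elim: s => //= k s ->; rewrite reflN. Qed.

Lemma wactB s x y : wact s (x - y) = wact s x - wact s y.
Proof. by rewrite wactD wactN. Qed.

Lemma wact0 s : wact s 0 = 0.
Proof. by elim: s => //= k s ->; rewrite refl0. Qed.

Lemma wact_sum s (I : Type) (r : seq I) (P : pred I) (F : I -> 'rV[R]_n) :
  wact s (\sum_(i <- r | P i) F i) = \sum_(i <- r | P i) wact s (F i).
Proof. exact: (big_morph (wact s) (wactD s) (wact0 s)). Qed.

Lemma wact_revK s : cancel (wact s) (wact (rev s)).
Proof.
by elim: s => //= k s IH x; rewrite rev_cons wact_rcons reflK ?IH.
Qed.

Lemma wactK s : cancel (wact (rev s)) (wact s).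
Proof. by rewrite -{2}(revK s); apply: wact_revK. Qed.

Lemma dot_wact s x y : dot (wact s x) (wact s y) = dot x y.
Proof. by elim: s => //= k s IH; rewrite dot_refl. Qed.

Lemma dot_wactl s x y : dot (wact s x) y = dot x (wact (rev s) y).
Proof. by rewrite -{1}(wactK s y) dot_wact. Qed.

Lemma wact_refl s a x : wact s (refl a x) = refl (wact s a) (wact s x).
Proof. by rewrite !reflE wactB wactZ !dot_wact. Qed.

Lemma Worbit_wact K mu s x : wordin K s -> Worbit alpha K mu x -> Worbit alpha K mu (wact s x).
Proof. by move=> Ks [z [Kz ->]]; exists (s ++ z); rewrite wordin_cat Ks Kz wact_cat. Qed.

Lemma Worbit_eq K mu mu' x :
  Worbit alpha K mu mu' -> Worbit alpha K mu x <-> Worbit alpha K mu' x.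
Proof.
move=> [s [Ks ->]]; split=> [[z [Kz ->]]|[z [Kz ->]]].
  by exists (z ++ rev s); rewrite wact_cat wact_revK wordin_cat wordin_rev Kz.
by exists (z ++ s); rewrite wact_cat wordin_cat Kz.
Qed.

Lemma image_wact_iff s (F G : 'rV[R]_n -> Prop) :
  (forall y, (exists x, F x /\ y = wact s x) <-> G y) <-> (forall x, F x <-> G (wact s x)).
Proof.
split=> FG x.
  split=> [Fx|/FG [x' [Fx' /(can_inj (wact_revK s)) ->]] //].
  by apply/FG; exists x.
split=> [[x' [Fx' ->]]|Gx]; first exact/FG.
by exists (wact (rev s) x); rewrite wactK; split=> //; apply/FG; rewrite wactK.
Qed.

End WeylWords.

Section RootSystem.
Variables (R : realFieldType) (n : nat) (Phi : seq 'rV[R]_n) (alpha : 'I_n -> 'rV[R]_n).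
Hypotheses (hPhi : root_system Phi) (halpha : simple_roots Phi alpha).
Implicit Types (K L : {set 'I_n}) (s z : seq 'I_n) (b d mu v x y : 'rV[R]_n).
Local Notation wact := (wact alpha).

Lemma simple_root_in i : alpha i \in Phi.
Proof. by case: halpha. Qed.

Lemma root_neq0 b : b \in Phi -> b != 0.
Proof. by case: hPhi => Phi0 _ _ _ Phib; apply: contraNneq Phi0 => <-. Qed.

Lemma simple_root_neq0 i : alpha i != 0.
Proof. exact/root_neq0/simple_root_in. Qed.

Lemma refl_simple_root_in k b : b \in Phi -> refl (alpha k) b \in Phi.
Proof. by case: hPhi => _ reflPhi _ _; apply/reflPhi/simple_root_in. Qed.

Lemma refl_simple_root k : refl (alpha k) (alpha k) = - alpha k.
Proof. exact/refl_self/simple_root_neq0. Qed.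

Lemma refl_simpleK k : involutive (refl (alpha k)).
Proof. exact/reflK/simple_root_neq0. Qed.

Definition simple_mx : 'M[R]_n := \matrix_i alpha i.

Lemma simple_mx_unit : simple_mx \in unitmx.
Proof.
rewrite -row_free_unit -kermx_eq0; apply/eqP/matrixP => i k; rewrite [RHS]mxE.
set K := kermx simple_mx; have <- : row i K 0 k = K i k by rewrite mxE.
have : row i K *m simple_mx = 0 by apply/sub_kermxP/row_sub.
rewrite mulmx_sum_row => ker0; case: halpha => _ alpha_free _.
by apply: alpha_free; rewrite -[RHS]ker0; apply: eq_bigr => j _; rewrite rowK.
Qed.

Definition fund_coweight j : 'rV[R]_n := (col j (invmx simple_mx))^T.

Definition rcoord j x : R := dot x (fund_coweight j).

Lemma rcoord_mx j x : rcoord j x = (x *m invmx simple_mx) 0 j.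
Proof. by rewrite /rcoord dotE !mxE; apply: eq_bigr => k _; rewrite !mxE. Qed.

Lemma rcoord_expand x : x = \sum_i rcoord i x *: alpha i.
Proof.
rewrite -{1}(mulmx1 x) -(mulVmx simple_mx_unit) mulmxA mulmx_sum_row.
by apply: eq_bigr => i _; rewrite rowK rcoord_mx.
Qed.

Lemma rcoord_simple i j : rcoord j (alpha i) = (i == j)%:R.
Proof.
have /matrixP/(_ i j) := mulmxV simple_mx_unit; rewrite !mxE => <-.
by rewrite rcoord_mx !mxE; apply: eq_bigr => k _; rewrite !mxE.
Qed.

Lemma rcoordB j x y : rcoord j (x - y) = rcoord j x - rcoord j y.
Proof. exact: dotBl. Qed.

Lemma rcoordZ j (c : R) x : rcoord j (c *: x) = c * rcoord j x.
Proof. exact: dotZl. Qed.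

Lemma rcoordN j x : rcoord j (- x) = - rcoord j x.
Proof. exact: dotNl. Qed.

Lemma rcoord_comb (c : 'I_n -> R) j : rcoord j (\sum_i c i *: alpha i) = c j.
Proof.
rewrite /rcoord dot_suml (bigD1 j) //= big1 => [|i /negbTE ij].
  by rewrite -/(rcoord j _) rcoordZ rcoord_simple eqxx mulr1 addr0.
by rewrite -/(rcoord j _) rcoordZ rcoord_simple ij mulr0.
Qed.

Lemma rcoord_eq0 x : (forall i, rcoord i x = 0) -> x = 0.
Proof. by move=> x0; rewrite (rcoord_expand x) big1 // => i _; rewrite x0 scale0r. Qed.

Lemma rcoord_refl k i x : k != i -> rcoord i (refl (alpha k) x) = rcoord i x.
Proof.
by move=> /negbTE ki; rewrite reflE rcoordB rcoordZ rcoord_simple ki mulr0 subr0.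
Qed.

Lemma rcoord_wact_notin K s i x : wordin K s -> i \notin K -> rcoord i (wact s x) = rcoord i x.
Proof.
elim: s => //= k s IH /andP [kK Ks] iK; rewrite rcoord_refl ?IH //.
by apply: contraNneq iK => <-.
Qed.

Lemma dot_rcoord v x : dot v x = \sum_i rcoord i x * dot v (alpha i).
Proof. by rewrite {1}(rcoord_expand x) dot_comb. Qed.

Definition pos_root b := (b \in Phi) && [forall i, 0 <= rcoord i b].

Definition pos_root_in K b := pos_root b && [forall i, (i \notin K) ==> (rcoord i b == 0)].

Definition pos_root_out K b := pos_root b && ~~ pos_root_in K b.

Lemma pos_rootP b : reflect (b \in Phi /\ forall i, 0 <= rcoord i b) (pos_root b).
Proof. by apply: (iffP andP) => -[Phib /forallP]. Qed.

Lemma pos_root_inP K b :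
  reflect (pos_root b /\ forall i, i \notin K -> rcoord i b = 0) (pos_root_in K b).
Proof.
apply: (iffP andP) => -[posb b0]; split=> //.
  by move=> i iK; apply/eqP; move/forallP/(_ i): b0; rewrite iK.
by apply/forallP => i; apply/implyP => /b0 ->.
Qed.

Lemma posrootP K b : reflect (posroot Phi alpha K b) (pos_root_in K b).
Proof.
apply: (iffP (pos_root_inP K b)) => [[/pos_rootP [Phib b_ge0] b0]|[Phib [c [bE c0]]]].
  split=> //; case: halpha => _ _ /(_ b Phib) [c [bE _]].
  have bc i : rcoord i b = (c i)%:~R by rewrite bE rcoord_comb.
  exists (fun i => `|c i|%N); split=> [|i /b0]; last first.
    by rewrite bc => /eqP; rewrite intr_eq0 => /eqP->.
  rewrite {1}bE; apply: eq_bigr => i _; congr (_ *: _).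
  by rewrite natr_absz ger0_norm // -(ler0z R) -bc.
split; last by move=> i iK; rewrite bE rcoord_comb c0.
by apply/pos_rootP; split=> // i; rewrite bE rcoord_comb ler0n.
Qed.

Lemma pos_root_in_setT b : pos_root_in setT b = pos_root b.
Proof.
by apply/(sameP (pos_root_inP _ _))/(iffP idP) => [|[] //]; split=> // i; rewrite in_setT.
Qed.

Lemma pos_root_outP K b :
  reflect (posroot Phi alpha setT b /\ ~ posroot Phi alpha K b) (pos_root_out K b).
Proof.
rewrite /pos_root_out -pos_root_in_setT.
apply: (iffP andP) => [[/posrootP posb /negP Kb]|[/posrootP posb Kb]]; split=> //.
  by move/posrootP.
by apply/negP => /posrootP.
Qed.

Lemma pos_root_in_sub K L b : K \subset L -> pos_root_in K b -> pos_root_in L b.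
Proof.
move=> /subsetP KL /pos_root_inP [posb b0]; apply/pos_root_inP; split=> // i iL.
by apply: b0; apply: contra iL; apply: KL.
Qed.

Lemma pos_root_in_setI K L b : pos_root_in K b -> pos_root_in L b -> pos_root_in (K :&: L) b.
Proof.
move=> /pos_root_inP [posb bK] /pos_root_inP [_ bL]; apply/pos_root_inP; split=> // i.
by rewrite inE negb_and => /orP [/bK|/bL].
Qed.

Lemma root_nonpos b : b \in Phi -> ~~ pos_root b -> forall i, rcoord i b <= 0.
Proof.
move=> Phib notpos i; case: halpha => _ _ /(_ b Phib) [c [bE [c_ge0|c_le0]]].
  by case/negP: notpos; apply/pos_rootP; split=> // j; rewrite bE rcoord_comb ler0z.
by rewrite bE rcoord_comb lerz0.
Qed.

Lemma pos_root_simple k : pos_root (alpha k).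
Proof. by apply/pos_rootP; split=> [|i]; rewrite ?simple_root_in // rcoord_simple ler0n. Qed.

Lemma pos_root_opp b : pos_root b -> ~~ pos_root (- b).
Proof.
move=> /pos_rootP [Phib b_ge0]; apply/negP => /pos_rootP [_ Nb_ge0].
have b0 : b = 0.
  by apply: rcoord_eq0 => i; apply/eqP; rewrite eq_le b_ge0 andbT -oppr_ge0 -rcoordN.
by move: (root_neq0 Phib); rewrite b0 eqxx.
Qed.

(* If [s_k b] were negative, [b] would be a multiple of [alpha k], hence [alpha k]
   by reducedness. *)
Lemma pos_root_refl k b : pos_root b -> b != alpha k -> pos_root (refl (alpha k) b).
Proof.
move=> posb b_neq; have Phib : b \in Phi by case/andP: posb.
apply/negPn/negP => /(root_nonpos (refl_simple_root_in k Phib)) refl_le0.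
have b0 i : k != i -> rcoord i b = 0.
  move=> ki; apply/le_anti; rewrite -{1}(rcoord_refl b ki) refl_le0.
  by case/pos_rootP: posb => _ ->.
have bE : b = rcoord k b *: alpha k.
  rewrite {1}(rcoord_expand b) (bigD1 k) //= big1 ?addr0 // => i ik.
  by rewrite b0 ?scale0r // eq_sym.
case: hPhi => _ _ _ /(_ (alpha k) (rcoord k b) (simple_root_in k)).
rewrite -bE => /(_ Phib) [b1|bN1].
  by move: b_neq; rewrite bE b1 scale1r eqxx.
by move/pos_rootP: posb => [_ /(_ k)]; rewrite bN1 ler0N1.
Qed.

Lemma pos_root_in_simple K k : k \in K -> pos_root_in K (alpha k).
Proof.
move=> kK; apply/pos_root_inP; split=> [|i iK]; first exact: pos_root_simple.
by rewrite rcoord_simple; case: eqP iK => // <-; rewrite kK.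
Qed.

Lemma pos_root_out_simple K i : i \notin K -> pos_root_out K (alpha i).
Proof.
move=> iK; rewrite /pos_root_out pos_root_simple; apply/negP => /pos_root_inP [_ /(_ i iK)].
by rewrite rcoord_simple eqxx => /eqP; rewrite oner_eq0.
Qed.

Lemma pos_root_in_refl K k b :
  k \in K -> pos_root_in K b -> b != alpha k -> pos_root_in K (refl (alpha k) b).
Proof.
move=> kK /pos_root_inP [posb b0] b_neq; apply/pos_root_inP; split; first exact: pos_root_refl.
by move=> i iK; rewrite rcoord_refl ?b0 //; apply: contraNneq iK => <-.
Qed.

Lemma pos_root_out_refl K k b : k \in K -> pos_root_out K b -> pos_root_out K (refl (alpha k) b).
Proof.
move=> kK /andP [posb notKb].
have b_neq : b != alpha k by apply: contraNneq notKb => ->; apply: pos_root_in_simple.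
rewrite /pos_root_out pos_root_refl //; apply/negP => Kb'.
have b'_neq : refl (alpha k) b != alpha k.
  apply: contraTneq posb => bE; rewrite -[b](refl_simpleK k) bE refl_simple_root.
  exact/pos_root_opp/pos_root_simple.
by move: (pos_root_in_refl kK Kb' b'_neq); rewrite refl_simpleK (negbTE notKb).
Qed.

Lemma pos_root_out_wact K s b : wordin K s -> pos_root_out K b -> pos_root_out K (wact s b).
Proof. by elim: s => //= k s IH /andP [kK Ks] Kb; apply/pos_root_out_refl/IH. Qed.

Definition dominant K mu := forall j, j \in K -> 0 <= dot mu (alpha j).

Definition antidominant v := forall i, dot v (alpha i) <= 0.

Definition zero_set v := [set i | dot v (alpha i) == 0].

Lemma exchange t s : ~~ pos_root (wact s (alpha t)) ->
  exists s', [/\ (size s' < size s)%N, {subset s' <= s}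
               & forall x, wact s (refl (alpha t) x) = wact s' x].
Proof.
elim: s => [|k s IH] /=; first by rewrite pos_root_simple.
case pos_st: (pos_root (wact s (alpha t))) => notpos; last first.
  have [s' [lt_s' sub_s' s'E]] := IH (negbT pos_st).
  exists (k :: s'); split=> // [y|x /=]; last by rewrite s'E.
  by rewrite !inE => /predU1P [->|/sub_s' ->]; rewrite ?eqxx ?orbT.
have stE : wact s (alpha t) = alpha k.
  by apply/eqP; apply: contraNT notpos => /(pos_root_refl pos_st).
exists s; split=> // [y sy|x]; first by rewrite inE sy orbT.
by rewrite (wact_refl simple_root_neq0) stE refl_simpleK.
Qed.

(* Induction on [s = s' t]: either [s' alpha_t] is positive and [s_t] lowers [mu] by a
   nonnegative multiple of [alpha_t], or the exchange condition shortens [s]. *)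
Lemma rcoord_wact_dominant K mu s i :
  dominant K mu -> wordin K s -> rcoord i (wact s mu) <= rcoord i mu.
Proof.
move=> domK; have [m] := ubnP (size s); elim: m s => // m IH s.
case/lastP: s => [//|s t]; rewrite size_rcons ltnS /wordin all_rcons => lt_s /andP [tK Ks].
rewrite wact_rcons; case pos_st: (pos_root (wact s (alpha t))); last first.
  have [s' [lt_s' sub_s' ->]] := exchange (negbT pos_st).
  by apply: IH; [apply: ltn_trans lt_s' lt_s | apply/allP => y /sub_s' /(allP Ks)].
rewrite reflE wactB wactZ rcoordB rcoordZ; apply: le_trans (IH s lt_s Ks).
rewrite lerBlDr lerDl !mulr_ge0 ?domK ?invr_ge0 ?dotrr_ge0 //.
by case/pos_rootP: pos_st.
Qed.

(* [s_k] permutes [Phi^+_K] minus [alpha k] and negates [alpha k], so this count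
   decreases when [v] is positive on [alpha k]. *)
Definition pos_pairings K v := count (fun b => pos_root_in K b && (0 < dot v b)) (undup Phi).

Lemma pos_pairings_refl K k v :
  k \in K -> 0 < dot v (alpha k) -> (pos_pairings K (refl (alpha k) v) < pos_pairings K v)%N.
Proof.
move=> kK vk; set f := refl (alpha k).
have fK : involutive f := refl_simpleK k.
have Phi_f : perm_eq (undup Phi) (map f (undup Phi)).
  apply: uniq_perm; rewrite ?map_inj_uniq ?undup_uniq //; first exact: inv_inj.
  move=> b; rewrite mem_undup; apply/idP/mapP => [Phib|[c]]; last first.
    by rewrite mem_undup => /(refl_simple_root_in k) ? ->.
  by exists (f b); rewrite ?fK // mem_undup refl_simple_root_in.
have alpha_Phi : alpha k \in undup Phi by rewrite mem_undup simple_root_in.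
have notK_Nalpha : ~~ pos_root_in K (- alpha k).
  by apply: contraL (pos_root_simple k) => /andP [/pos_root_opp]; rewrite opprK.
have count_f : pos_pairings K (f v) =
    count (fun b => pos_root_in K (f b) && (0 < dot v b)) (undup Phi).
  rewrite /pos_pairings (permP Phi_f) count_map; apply: eq_count => b /=.
  by rewrite dot_refl ?simple_root_neq0.
rewrite count_f /pos_pairings !(permP (perm_to_rem alpha_Phi)) /= [f (alpha k)]refl_simple_root.
rewrite (pos_root_in_simple kK) vk (negbTE notK_Nalpha) add1n ltnS.
apply: sub_count => b /andP [Kfb vb]; rewrite vb andbT.
have fb_neq : f b != alpha k.
  apply: contraTneq vb => fbE; rewrite -[b]fK fbE [f _]refl_simple_root dotNr oppr_gt0.
  by rewrite -leNgt ltW.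
by rewrite -[b]fK (pos_root_in_refl kK Kfb fb_neq).
Qed.

Lemma exists_wact_antidominant K v :
  exists z, wordin K z /\ forall k, k \in K -> dot (wact z v) (alpha k) <= 0.
Proof.
have [m] := ubnP (pos_pairings K v); elim: m v => // m IH v.
rewrite ltnS => lt_v.
have [/existsP [k /andP [kK vk]]|] := boolP [exists k, (k \in K) && (0 < dot v (alpha k))].
  have [z [Kz zv]] := IH _ (leq_trans (pos_pairings_refl kK vk) lt_v).
  by exists (rcons z k); rewrite wact_rcons /wordin all_rcons kK.
rewrite negb_exists => /forallP v_le0; exists [::]; split=> // k kK.
by move: (v_le0 k); rewrite kK leNgt.
Qed.

Lemma antidominant_dot_le0 v d : antidominant v -> (forall i, 0 <= rcoord i d) -> dot v d <= 0.
Proof.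
by move=> antiv d_ge0; rewrite dot_rcoord sumr_le0 // => i _; rewrite mulr_ge0_le0.
Qed.

Lemma antidominant_support v d :
  antidominant v -> (forall i, 0 <= rcoord i d) -> dot v d = 0 ->
  forall i, i \notin zero_set v -> rcoord i d = 0.
Proof.
move=> antiv d_ge0 vd0 i; rewrite inE => vi_neq0.
have term_ge0 j : true -> 0 <= - (rcoord j d * dot v (alpha j)).
  by rewrite oppr_ge0 mulr_ge0_le0.
have /(psumr_eq0P term_ge0)/(_ i isT)/eqP : \sum_j - (rcoord j d * dot v (alpha j)) = 0.
  by rewrite sumrN -dot_rcoord ?vd0 ?oppr0.
by rewrite oppr_eq0 mulf_eq0 (negbTE vi_neq0) orbF => /eqP.
Qed.

Lemma dot_wact_zero_set v K z x :
  K \subset zero_set v -> wordin K z -> dot v (wact z x) = dot v x.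
Proof.
move=> /subsetP Kv; elim: z => //= k z IH /andP [kK Kz].
have vk : dot v (alpha k) = 0 by apply/eqP; move: (Kv k kK); rewrite inE.
by rewrite dotC dot_refll dotC refl_id ?IH.
Qed.

(* Expanding [|mu|^2 = |mu2 + d|^2] with [(mu2, d) >= 0] forces [|d|^2 = 0]. *)
Lemma dominant_norm_eq L mu mu2 :
  dominant L mu2 -> (forall i, 0 <= rcoord i (mu - mu2)) ->
  (forall i, i \notin L -> rcoord i (mu - mu2) = 0) -> dot mu2 mu2 = dot mu mu -> mu2 = mu.
Proof.
set d := mu - mu2 => domL d_ge0 d0 norm_eq.
have mu2d_ge0 : 0 <= dot mu2 d.
  rewrite dot_rcoord sumr_ge0 // => i _.
  by case: (boolP (i \in L)) => [/domL|/d0 ->]; [apply: mulr_ge0 | rewrite mul0r].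
have /eqP : (dot mu2 d + dot mu2 d) + dot d d = 0.
  by apply: (addrI (dot mu2 mu2)); rewrite addrA -dotrrD /d addrC subrK norm_eq addr0.
rewrite paddr_eq0 ?addr_ge0 ?dotrr_ge0 // => /andP [_ /eqP /dotrr_eq0 /eqP].
by rewrite subr_eq0 => /eqP.
Qed.

Lemma dot_wact_dominant_ge K v mu s :
  dominant K mu -> antidominant v -> wordin K s -> dot v mu <= dot v (wact s mu).
Proof.
move=> domK antiv Ks; rewrite -subr_le0 -dotBr antidominant_dot_le0 // => i.
by rewrite rcoordB subr_ge0 (rcoord_wact_dominant _ domK).
Qed.

Lemma Worbit_dot_eq K v mu s :
  dominant K mu -> antidominant v -> wordin K s -> dot v (wact s mu) = dot v mu ->
  Worbit alpha (K :&: zero_set v) mu (wact s mu).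
Proof.
move=> domK antiv Ks vs_eq; set L := K :&: zero_set v.
have [z [Lz zs_le0]] := exists_wact_antidominant L (- wact s mu).
set mu2 := wact z (wact s mu).
have Kzs : wordin K (z ++ s) by rewrite wordin_cat Ks (wordin_sub (subsetIl _ _) Lz).
have d_ge0 i : 0 <= rcoord i (mu - mu2).
  by rewrite rcoordB subr_ge0 /mu2 -wact_cat (rcoord_wact_dominant _ domK).
have vd0 : dot v (mu - mu2) = 0.
  by rewrite dotBr /mu2 (@dot_wact_zero_set v L) ?subsetIr // vs_eq subrr.
have mu2E : mu2 = mu.
  apply: (dominant_norm_eq (L := L)) => //.
  - by move=> j /zs_le0; rewrite wactN dotNl oppr_le0.
  - move=> i; rewrite inE negb_and => /orP [iK|]; last exact: antidominant_support.
    by rewrite rcoordB /mu2 -wact_cat (rcoord_wact_notin _ Kzs iK) subrr.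
  - by rewrite /mu2 !(dot_wact simple_root_neq0).
exists (rev z); split; first by rewrite wordin_rev.
by rewrite -[in RHS]mu2E /mu2 (wact_revK simple_root_neq0).
Qed.

Lemma pos_root_in_zero_set v b : pos_root_in (zero_set v) b -> dot v b = 0.
Proof.
move=> /pos_root_inP [_ b0]; rewrite dot_rcoord big1 // => i _.
case: (boolP (i \in zero_set v)) => [|/b0 ->]; last by rewrite mul0r.
by rewrite inE => /eqP ->; rewrite mulr0.
Qed.

Lemma pos_root_out_zero_set J v b : antidominant v ->
  (posroot Phi alpha setT b /\ ~ posroot Phi alpha J b) /\ dot v b = 0 <->
  posroot Phi alpha (zero_set v) b /\ ~ posroot Phi alpha (J :&: zero_set v) b.
Proof.
move=> antiv; split=> [[/pos_root_outP /andP [posb notJb] vb0]|[/posrootP vb notJvb]].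
  have vb : pos_root_in (zero_set v) b.
    apply/pos_root_inP; split=> //; apply: antidominant_support => //.
    by case/pos_rootP: posb.
  split; first exact/posrootP.
  by move/posrootP/(pos_root_in_sub (subsetIl _ _)); apply/negP.
split; last exact: pos_root_in_zero_set.
apply/pos_root_outP; rewrite /pos_root_out; case/andP: (vb) => -> _ /=.
by apply: contra_notN notJvb => Jb; apply/posrootP/pos_root_in_setI.
Qed.

Lemma Worbit_zero_set J v mu y : dominant J mu -> antidominant v ->
  Worbit alpha J mu y /\ dot v y = dot v mu <-> Worbit alpha (J :&: zero_set v) mu y.
Proof.
move=> domJ antiv; split=> [[[s [Js ->]]]|[s [Ls ->]]]; first exact: Worbit_dot_eq.
split; first by exists s; rewrite (wordin_sub (subsetIl _ _) Ls).
by apply: dot_wact_zero_set Ls; apply: subsetIr.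
Qed.

Lemma Ppoly_self K L mu : Ppoly Phi alpha K L mu mu.
Proof.
by exists mu, 0; split; [apply: conv1; exists [::] | apply: cone0 | rewrite subr0].
Qed.

Lemma Ppoly_eq K L mu mu' x : Worbit alpha K mu mu' ->
  Ppoly Phi alpha K L mu x <-> Ppoly Phi alpha K L mu' x.
Proof.
by move=> mu_mu'; split; apply: msub_conv_cone_mono => y // /(Worbit_eq simple_root_neq0 _ mu_mu').
Qed.

Lemma Ppoly_wact J mu s u : wordin J s ->
  Ppoly Phi alpha J setT mu u -> Ppoly Phi alpha J setT mu (wact s u).
Proof.
move=> Js [a [b [[m [p [t [Wp t_ge0 t1 ->]]]] [m' [q [c [Cq c_ge0 ->]]]] ->]]].
exists (\sum_i t i *: wact s (p i)), (\sum_k c k *: wact s (q k)); split.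
- by exists m, (fun i => wact s (p i)), t; split=> // i; apply: Worbit_wact.
- exists m', (fun k => wact s (q k)), c; split=> // k.
  exact/pos_root_outP/pos_root_out_wact/pos_root_outP.
- by rewrite wactB !wact_sum; congr (_ - _); apply: eq_bigr => i _; rewrite wactZ.
Qed.

Lemma Ppoly_wactE J mu s u : wordin J s ->
  Ppoly Phi alpha J setT mu (wact s u) <-> Ppoly Phi alpha J setT mu u.
Proof.
move=> Js; split=> [|/(Ppoly_wact Js)] //.
by move/(Ppoly_wact (s := rev s)); rewrite (wact_revK simple_root_neq0) wordin_rev; apply.
Qed.

(* Otherwise [v] would be unbounded below along the ray [mu - t b] inside [P]. *)
Lemma dot_pos_root_out_le0 J mu v c b :
  (forall u, Ppoly Phi alpha J setT mu u -> c <= dot v u) -> pos_root_out J b -> dot v b <= 0.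
Proof.
move=> v_ge Jb; rewrite leNgt; apply/negP => vb_gt0.
set t := (`|dot v mu - c| + 1) / dot v b.
have P_ray : Ppoly Phi alpha J setT mu (mu - t *: b).
  exists mu, (t *: b); split=> //; first by apply: conv1; exists [::].
  apply: cone1; last exact/pos_root_outP.
  exact: divr_ge0 (addr_ge0 (normr_ge0 _) ler01) (ltW vb_gt0).
move: (v_ge _ P_ray); rewrite dotBr dotZr divfK ?gt_eqF // lerBrDr addrC -lerBrDr.
by move/le_trans/(_ (ler_norm _)); rewrite gerDl ler10.
Qed.

Lemma exists_wact_antidominant_bounded J mu v c :
  (forall u, Ppoly Phi alpha J setT mu u -> c <= dot v u) ->
  exists z, wordin J z /\ antidominant (wact z v).
Proof.
move=> v_ge; have [z [Jz zv]] := exists_wact_antidominant J v; exists z; split=> // i.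
have [/zv //|iJ] := boolP (i \in J).
rewrite (dot_wactl simple_root_neq0); apply: (dot_pos_root_out_le0 v_ge).
by apply: pos_root_out_wact (pos_root_out_simple iJ); rewrite wordin_rev.
Qed.

Lemma exists_antidominant_zero_set I0 : exists v, antidominant v /\ zero_set v = I0.
Proof.
exists (- \sum_(i | i \notin I0) fund_coweight i).
have valpha j : dot (- \sum_(i | i \notin I0) fund_coweight i) (alpha j) = - (j \notin I0)%:R.
  rewrite dotNl dot_suml; congr (- _).
  under eq_bigr => i _ do rewrite dotC -/(rcoord i _) rcoord_simple.
  case: (boolP (j \in I0)) => jI0 /=.
    by rewrite big1 // => i iI0; case: eqP iI0 => // <-; rewrite jI0.
  by rewrite (bigD1 j) //= eqxx big1 ?addr0 // => i /andP [_ ij]; rewrite eq_sym (negbTE ij).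
split=> [j|]; first by rewrite valpha oppr_le0 ler0n.
by apply/setP => j; rewrite inE valpha oppr_eq0 pnatr_eq0 eqb0 negbK.
Qed.

Lemma Ppoly_dot_ge J v mu u : dominant J mu -> antidominant v ->
  Ppoly Phi alpha J setT mu u -> dot v mu <= dot v u.
Proof.
move=> domJ antiv; apply: msub_conv_cone_dot_ge => [y [s [Js ->]]|b /pos_root_outP /andP [posb _]].
  exact: dot_wact_dominant_ge domJ antiv Js.
by apply: antidominant_dot_le0 => //; case/pos_rootP: posb.
Qed.

Lemma Ppoly_dot_eq J v mu u : dominant J mu -> antidominant v ->
  Ppoly Phi alpha J setT mu u /\ dot v u = dot v mu <->
  Ppoly Phi alpha (J :&: zero_set v) (zero_set v) mu u.
Proof.
move=> domJ antiv; apply: iff_trans (msub_conv_cone_dot_eq u _ _) _.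
- by move=> y [s [Js ->]]; apply: dot_wact_dominant_ge domJ antiv Js.
- by move=> b /pos_root_outP /andP [/pos_rootP [_ b_ge0] _]; apply: antidominant_dot_le0.
split; apply: msub_conv_cone_mono => y.
- by move/(Worbit_zero_set y domJ antiv).
- by move/(pos_root_out_zero_set J y antiv).
- by move/(Worbit_zero_set y domJ antiv).
- by move/(pos_root_out_zero_set J y antiv).
Qed.

(* [W_J] preserves [P], so conjugating the normal [v] by [s] conjugates the face. *)
Lemma Ppoly_min_face J mu v s : dominant J mu -> antidominant v -> wordin J s ->
  [/\ forall u, Ppoly Phi alpha J setT mu u -> dot v mu <= dot (wact (rev s) v) u,
      exists u, Ppoly Phi alpha J setT mu u /\ dot (wact (rev s) v) u = dot v mu
    & forall u, Ppoly Phi alpha J setT mu u /\ dot (wact (rev s) v) u = dot v mu <->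
                Ppoly Phi alpha (J :&: zero_set v) (zero_set v) mu (wact s u)].
Proof.
move=> domJ antiv Js; have dotE u : dot (wact (rev s) v) u = dot v (wact s u).
  by rewrite (dot_wactl simple_root_neq0) revK.
have Js' : wordin J (rev s) by rewrite wordin_rev.
split=> [u Pu||u]; rewrite ?dotE.
- exact: Ppoly_dot_ge domJ antiv (Ppoly_wact Js Pu).
- exists (wact (rev s) mu); rewrite dotE (wactK simple_root_neq0).
  by split=> //; apply: Ppoly_wact Js' (Ppoly_self _ _ _).
- apply: iff_trans (Ppoly_dot_eq _ domJ antiv).
  by split=> -[Pu vu]; split=> //; apply/(Ppoly_wactE _ _ Js).
Qed.

End RootSystem.

Theorem mainTheorem6 (R : realFieldType) (n : nat)
  (Phi : seq 'rV[R]_n) (alpha : 'I_n -> 'rV[R]_n)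
  (hPhi : root_system Phi) (halpha : simple_roots Phi alpha)
  (lam : 'rV[R]_n) (J : {set 'I_n}) (lam' : 'rV[R]_n)
  (hlam'1 : Worbit alpha J lam lam')
  (hlam'2 : forall j, j \in J -> 0 <= dot lam' (alpha j))
  (F : 'rV[R]_n -> Prop) :
  is_face (Ppoly Phi alpha J setT lam) F <->
  exists (s : seq 'I_n) (I0 : {set 'I_n}),
    wordin J s /\
    (forall y, (exists x, F x /\ y = wact alpha s x) <->
               Ppoly Phi alpha (J :&: I0) I0 lam' y).
Proof.
have alpha_neq0 := simple_root_neq0 hPhi halpha.
have domJ : dominant alpha J lam' := hlam'2.
have P_lam_lam' x := Ppoly_eq hPhi halpha setT x hlam'1.
have P_ne : exists u, Ppoly Phi alpha J setT lam' u by exists lam'; apply: Ppoly_self.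
split=> [/(is_face_ext P_lam_lam')|[s [I0 [Js /(image_wact_iff alpha_neq0) FE]]]].
  move=> /(is_face_min _ P_ne) [v [c [v_ge [u0 [Pu0 u0c]] FE]]].
  have [z [Jz antiv]] := exists_wact_antidominant_bounded hPhi halpha v_ge.
  have [v'_ge [u1 [Pu1 u1c]] v'_eq] := Ppoly_min_face hPhi halpha domJ antiv Jz.
  rewrite (wact_revK alpha_neq0) in v'_ge u1c v'_eq.
  have cE : c = dot (wact alpha z v) lam'.
    by apply: le_anti; rewrite -{1}u1c v_ge //= -u0c v'_ge.
  exists z, (zero_set alpha (wact alpha z v)); split=> //; apply/(image_wact_iff alpha_neq0) => u.
  by rewrite cE in FE; apply: iff_trans (FE u) (v'_eq u).
have [v [antiv vI0]] := exists_antidominant_zero_set halpha I0; subst I0.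
have [v_ge v_min v_eq] := Ppoly_min_face hPhi halpha domJ antiv Js.
apply: is_face_ext (fun x => iff_sym (P_lam_lam' x)) _; apply/is_face_min => //.
exists (wact alpha (rev s) v), (dot v lam'); split=> // u.
exact: iff_trans (FE u) (iff_sym (v_eq u)).
Qed.
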